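(* Let $K$ be a field of characteristic zero and let $(p_n(x))_{n\ge0}$ be any sequence of polynomials in $K[x]$ with $\deg p_n=n$. Then: (a) the relations $Qp_n(x)=p_{n-1}(x)$ for $n>0$ and $Qp_0(x)=0$ define a unique $K$-linear operator $Q$ on $K[x]$; (b) the relations $q_n(0)=\delta_{n0}$, $Qq_n(x)=q_{n-1}(x)$ for $n>0$ and $Qq_0(x)=0$ define a unique sequence of polynomials $(q_n(x))_{n\ge0}$; (c) the relation $P_xq_n(x)=p_n(x)$ defines a $K$-linear operator $P_x$ on $K[x]$, and $P_x$ is invertible and $Q$-invariant, i.e. $P_xQ=QP_x$; (d) the sum $G^{(y)}=\sum_{n=0}^{\infty}q_n(y)\,Q^{n}$ converges (when applied to any polynomial only finitely many terms are nonzero) and defines a linear map $K[x]\to K[x,y]$, and the unique $K$-linear operator $F^{(y)}:K[x]\to K[x,y]$ satisfying $F^{(y)}p_n(x)=\sum_{k=0}^{n}p_k(x)\,p_{n-k}(y)$ for all $n\ge0$ is $F^{(y)}=P_yG^{(y)}$.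
   Context: A sequence of polynomials means a sequence $(r_n(x))_{n\ge0}$ with $\deg r_n=n$. In $G^{(y)}=\sum_n q_n(y)Q^n$, $Q$ acts on the variable $x$ and $q_n(y)$ is a scalar multiplier from $K[y]$. For an operator $\phi_x$ on $K[x]$, $\phi_y$ denotes the corresponding operator acting on the variable $y$ (obtained by renaming $x$ to $y$), extended $K[x]$-linearly to $K[x,y]$; operators on $K[x]$ are extended $K[y]$-linearly to $K[x,y]$. *)

From HB Require Import structures.
From mathcomp Require Import all_boot all_order all_algebra.
From mathcomp Require Import polyXY.
Set Implicit Arguments. Unset Strict Implicit. Unset Printing Implicit Defensive.
Import GRing.Theory.
Local Open Scope ring_scope.

(* Representation of K[x,y]: {poly {poly K}}, an (outer) polynomial in y whose
   coefficients are polynomials in x.  A polynomial f(x) embeds as f%:P,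
   a polynomial g(y) embeds as map_poly polyC g. *)

Definition xemb (K : fieldType) (f : {poly K}) : {poly {poly K}} := f%:P.
Definition yemb (K : fieldType) (g : {poly K}) : {poly {poly K}} := map_poly polyC g.

Definition opx (K : fieldType) (phi : {poly K} -> {poly K}) (h : {poly {poly K}}) :
  {poly {poly K}} := map_poly phi h.

(* the operator phi_y: phi acting on the y variable, extended K[x]-linearly *)
Definition opy (K : fieldType) (phi : {poly K} -> {poly K}) (h : {poly {poly K}}) :
  {poly {poly K}} := swapXY (map_poly phi (swapXY h)).

Definition lin2 (K : fieldType) (F : {poly K} -> {poly {poly K}}) : Prop :=
  forall (c : K) (f g : {poly K}), F (c *: f + g) = xemb c%:P * F f + F g.

Definition isQ (K : fieldType) (p : nat -> {poly K}) (Q : {poly K} -> {poly K}) : Prop :=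
  linear Q /\ Q (p 0%N) = 0 /\ (forall n, Q (p n.+1) = p n).

Definition isq (K : fieldType) (Q : {poly K} -> {poly K}) (q : nat -> {poly K}) : Prop :=
  (forall n, size (q n) = n.+1) /\
  (forall n, (q n).[0] = (n == 0%N)%:R) /\
  Q (q 0%N) = 0 /\ (forall n, Q (q n.+1) = q n).

Definition Gsum (K : fieldType) (q : nat -> {poly K}) (Q : {poly K} -> {poly K})
  (N : nat) (f : {poly K}) : {poly {poly K}} :=
  \sum_(n < N) yemb (q n) * xemb (iter n Q f).

Definition convp (K : fieldType) (p : nat -> {poly K}) (n : nat) : {poly {poly K}} :=
  \sum_(k < n.+1) xemb (p k) * yemb (p (n - k)%N).

From Stdlib Require Import FunctionalExtensionality.
From HB Require Import structures.
From mathcomp Require Import all_boot all_order all_algebra polyXY.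
Import GRing.Theory.
Local Open Scope ring_scope.

(* A sequence b with deg b_n = n is a triangular basis of K[x], so a linear map
   on K[x] is determined by, and may be freely prescribed on, the b_n.  This
   gives Q, which then lowers degrees by exactly one: its kernel is the
   constants and it is locally nilpotent.  So the q_n are forced by
   q_n(0) = delta_n0 and Q q_n = q_(n-1), and they are built with the right
   inverse p_n |-> p_(n+1) of Q, corrected by a constant.  P sends the basis
   (q_n) to the basis (p_n), hence is bijective, and P Q = Q P because both
   send q_n to p_(n-1).  Finally Q^k p_n = p_(n-k), so
   P_y G^(y) p_n = sum_k P(q_k)(y) p_(n-k)(x) = sum_k p_k(y) p_(n-k)(x). *)

Section BasisOperators.
Set Implicit Arguments.
Unset Strict Implicit.
Variable K : fieldType.

Lemma size_scale_addr_leq a (f g : {poly K}) :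
  (size (a *: f + g)%R <= maxn (size f) (size g))%N.
Proof.
rewrite (leq_trans (size_polyD _ _)) // geq_max leq_maxr.
by rewrite (leq_trans (size_scale_leq _ _)) ?leq_maxl.
Qed.

Section PolyBasis.
Variable b : nat -> {poly K}.
Hypothesis size_b : forall n, size (b n) = n.+1.
Implicit Types f g h : {poly K}.

Definition basis_coef n (f : {poly K}) : K := f`_n / lead_coef (b n).

Lemma basis_coefE n a f g :
  basis_coef n (a *: f + g) = a * basis_coef n f + basis_coef n g.
Proof. by rewrite /basis_coef coefD coefZ mulrDl mulrA. Qed.

Lemma lead_coef_basis_neq0 n : lead_coef (b n) != 0.
Proof. by rewrite lead_coef_eq0 -size_poly_eq0 size_b. Qed.

Lemma coef_basis_lead n : (b n)`_n = lead_coef (b n).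
Proof. by rewrite /lead_coef size_b. Qed.

Lemma basis_coef_basis n : basis_coef n (b n) = 1.
Proof. by rewrite /basis_coef coef_basis_lead divff ?lead_coef_basis_neq0. Qed.

Lemma basis_coef_neq0 n f : size f = n.+1 -> basis_coef n f != 0.
Proof.
move=> sf; rewrite mulf_neq0 ?invr_eq0 ?lead_coef_basis_neq0 //.
by rewrite -[n]/(n.+1.-1) -sf -/(lead_coef f) lead_coef_eq0 -size_poly_eq0 sf.
Qed.

Lemma size_sub_basis_coef n f :
  (size f <= n.+1)%N -> (size (f - basis_coef n f *: b n)%R <= n)%N.
Proof.
move=> sf; apply/leq_sizeP => j le_nj; rewrite coefB coefZ.
move: le_nj; rewrite leq_eqVlt => /orP[/eqP <- | lt_nj].
  by rewrite coef_basis_lead mulfVK ?subrr ?lead_coef_basis_neq0.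
by rewrite !nth_default ?size_b ?mulr0 ?subr0 // (leq_trans sf).
Qed.

Lemma basis_ind (S : {poly K} -> Prop) :
  (forall c f g, S f -> S g -> S (c *: f + g)) -> (forall n, S (b n)) ->
  forall f, S f.
Proof.
move=> S_lin S_b.
have S0 : S 0 by rewrite -(addNr (b 0)) -scaleN1r; apply: S_lin.
suff S_size n f : (size f <= n)%N -> S f by move=> f; apply: (S_size (size f)).
elim: n f => [|n IHn] f sf; first by move: sf; rewrite leqn0 size_poly_eq0 => /eqP ->.
by rewrite -(subrK (basis_coef n f *: b n) f) addrC; apply/S_lin/IHn/size_sub_basis_coef.
Qed.

Lemma eq_linear_on_basis (E1 E2 : {poly K} -> {poly K}) :
  linear E1 -> linear E2 -> (forall n, E1 (b n) = E2 (b n)) -> E1 =1 E2.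
Proof.
by move=> E1_lin E2_lin; apply: basis_ind => c f g e1 e2; rewrite E1_lin E2_lin e1 e2.
Qed.

Lemma eq_lin2_on_basis (F1 F2 : {poly K} -> {poly {poly K}}) :
  lin2 F1 -> lin2 F2 -> (forall n, F1 (b n) = F2 (b n)) -> F1 =1 F2.
Proof.
by move=> F1_lin F2_lin; apply: basis_ind => c f g e1 e2; rewrite F1_lin F2_lin e1 e2.
Qed.

(* For size f <= n, expanding f = sum_(m < n) c_m b_m (top coefficient first),
   extend v n f is sum_(m < n) c_m v_m. *)
Fixpoint extend (v : nat -> {poly K}) n f : {poly K} :=
  if n is m.+1 then basis_coef m f *: v m + extend v m (f - basis_coef m f *: b m)
  else 0.

Lemma extend_linear v n : linear (extend v n).
Proof.
elim: n => [|n IHn] a f g /=; first by rewrite scaler0 addr0.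
have -> : a *: f + g - basis_coef n (a *: f + g) *: b n
          = a *: (f - basis_coef n f *: b n) + (g - basis_coef n g *: b n).
  by rewrite basis_coefE scalerBr scalerA addrACA -opprD -scalerDl.
by rewrite IHn basis_coefE scalerDl -scalerA addrACA -scalerDr.
Qed.

Lemma extend_stable v n k f : (size f <= n)%N -> extend v (n + k) f = extend v n f.
Proof.
move=> sf; elim: k => [|k IHk]; first by rewrite addn0.
rewrite addnS /= /basis_coef nth_default ?(leq_trans sf (leq_addr _ _)) //.
by rewrite mul0r !scale0r add0r subr0.
Qed.

Definition extension v f := extend v (size f) f.

Lemma extension_linear v : linear (extension v).
Proof.
move=> a f g; set M := maxn (size f) (size g).
have extendM h : (size h <= M)%N -> extension v h = extend v M h.
  by move=> sh; rewrite /extension -(subnKC sh) extend_stable.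
by rewrite !extendM ?leq_maxl ?leq_maxr ?extend_linear ?size_scale_addr_leq.
Qed.

Lemma extend0 v n : extend v n 0 = 0.
Proof. by elim: n => //= n IHn; rewrite /basis_coef coef0 mul0r !scale0r subr0 add0r. Qed.

Lemma extension_basis v n : extension v (b n) = v n.
Proof. by rewrite /extension size_b /= basis_coef_basis !scale1r subrr extend0 addr0. Qed.

Lemma linear_extension_unique v :
  exists! E : {poly K} -> {poly K}, linear E /\ forall n, E (b n) = v n.
Proof.
exists (extension v); split=> [|E [E_lin E_b]].
  by split; [apply: extension_linear | apply: extension_basis].
apply: functional_extensionality; apply: eq_linear_on_basis => // [|n].
  exact: extension_linear.
by rewrite extension_basis E_b.
Qed.

End PolyBasis.

Lemma linear_basis_bij (b b' : nat -> {poly K}) (E : {poly K} -> {poly K}) :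
  (forall n, size (b n) = n.+1) -> (forall n, size (b' n) = n.+1) ->
  linear E -> (forall n, E (b n) = b' n) -> bijective E.
Proof.
move=> size_b size_b' E_lin E_b; exists (extension b' b).
  apply: (eq_linear_on_basis size_b (E1 := extension b' b \o E) (E2 := id))
    => // [a f g | n] /=.
    by rewrite E_lin extension_linear.
  by rewrite E_b extension_basis.
apply: (eq_linear_on_basis size_b' (E1 := E \o extension b' b) (E2 := id))
  => // [a f g | n] /=.
  by rewrite extension_linear E_lin.
by rewrite extension_basis // E_b.
Qed.

Section Lowering.
Implicit Types f g h : {poly K}.
Variable p : nat -> {poly K}.
Hypothesis size_p : forall n, size (p n) = n.+1.
Variable Q : {poly K} -> {poly K}.
Hypothesis Q_lin : linear Q.
Hypothesis Q_p0 : Q (p 0) = 0.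
Hypothesis Q_pS : forall n, Q (p n.+1) = p n.

HB.instance Definition _ := GRing.isLinear.Build K {poly K} {poly K} _ Q Q_lin.

Lemma size_lower f : size (Q f) = (size f).-1.
Proof.
have [n sf] : exists n, (size f <= n)%N by exists (size f).
elim: n f sf => [|n IHn] f sf.
  by move: sf; rewrite leqn0 size_poly_eq0 => /eqP ->; rewrite raddf0 size_poly0.
move: sf; rewrite leq_eqVlt => /orP[/eqP sf | ]; last exact: IHn.
set c := basis_coef p n f.
have s_rest : (size (f - c *: p n)%R <= n)%N := size_sub_basis_coef size_p (eq_leq sf).
have -> : Q f = c *: Q (p n) + Q (f - c *: p n) by rewrite -linearZ -raddfD addrC subrK.
rewrite sf /=; case: n IHn sf @c s_rest => [|n] IHn sf c s_rest.
  move: s_rest; rewrite leqn0 size_poly_eq0 => /eqP ->.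
  by rewrite Q_p0 scaler0 raddf0 addr0 size_poly0.
rewrite Q_pS size_polyDl size_scale ?size_p ?basis_coef_neq0 // IHn //.
by case: (size _) s_rest.
Qed.

Lemma lower_const c : Q c%:P = 0.
Proof.
by apply/eqP; rewrite -size_poly_eq0 size_lower; case: size (size_polyC_leq1 c) => [|[]].
Qed.

Lemma lower_inj_at0 f g : Q f = Q g -> f.[0] = g.[0] -> f = g.
Proof.
move=> /eqP; rewrite -subr_eq0 -raddfB -size_poly_eq0 size_lower => s_fg fg0.
apply/eqP; rewrite -subr_eq0 (size1_polyC (_ : size (f - g)%R <= 1)%N).
  by rewrite -horner_coef0 hornerD hornerN fg0 subrr.
by case: size s_fg => [|[]].
Qed.

Lemma size_iter_lower n f : size (iter n Q f) = (size f - n)%N.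
Proof. by elim: n => [|n IHn]; rewrite ?subn0 //= size_lower IHn subnS. Qed.

Lemma iter_lower_eq0 n f : (size f <= n)%N -> iter n Q f = 0.
Proof. by move=> sf; apply/eqP; rewrite -size_poly_eq0 size_iter_lower subn_eq0. Qed.

Lemma iter_lower_basis k n : (k <= n)%N -> iter k Q (p n) = p (n - k).
Proof.
elim: k => [|k IHk] le_kn; first by rewrite subn0.
by rewrite iterS IHk ?(ltnW le_kn) // -(subnSK le_kn) Q_pS.
Qed.

Definition raise := extension p (fun n => p n.+1).

Lemma lower_raise f : Q (raise f) = f.
Proof.
apply: (eq_linear_on_basis size_p (E1 := Q \o raise) (E2 := id)) => // [a g h | n] /=.
  by rewrite /raise extension_linear linearP.
by rewrite /raise extension_basis // Q_pS.
Qed.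

(* The unique preimage of f under Q vanishing at 0. *)
Definition raise0 f := raise f - (raise f).[0]%:P.

Lemma lower_raise0 f : Q (raise0 f) = f.
Proof. by rewrite raddfB /= lower_raise lower_const subr0. Qed.

Lemma raise0_at0 f : (raise0 f).[0] = 0.
Proof. by rewrite hornerD hornerN hornerC subrr. Qed.

Definition basic_poly n := iter n raise0 1.

Lemma size_basic_poly n : size (basic_poly n) = n.+1.
Proof.
elim: n => [|n IHn]; first by rewrite size_poly1.
by have := size_lower (raise0 (basic_poly n)); rewrite lower_raise0 IHn; case: size => // k ->.
Qed.

Lemma basic_poly_isq : isq Q basic_poly.
Proof.
split; first exact: size_basic_poly.
split; first by case=> [|n]; rewrite ?hornerC ?raise0_at0.
by split; [rewrite /basic_poly /= -polyC1 lower_const | move=> n; apply: lower_raise0].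
Qed.

Lemma isq_unique q q' : isq Q q -> isq Q q' -> q =1 q'.
Proof.
move=> [_ [q_at0 [Q_q0 Q_qS]]] [_ [q'_at0 [Q_q'0 Q_q'S]]].
elim=> [|n IHn]; apply: lower_inj_at0; rewrite ?q_at0 ?q'_at0 //.
  by rewrite Q_q0 Q_q'0.
by rewrite Q_qS Q_q'S.
Qed.

Lemma iter_linear n : linear (iter n Q).
Proof. by elim: n => [|n IHn] a f g //=; rewrite IHn linearP. Qed.

Variable q : nat -> {poly K}.

Lemma Gsum_lin2 N : lin2 (Gsum q Q N).
Proof.
move=> c f g; rewrite /Gsum mulr_sumr -big_split; apply: eq_bigr => i _ /=.
by rewrite iter_linear /xemb polyCD -mul_polyC polyCM mulrDr mulrCA.
Qed.

Lemma Gsum_stable N M f :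
  (forall n, (N <= n)%N -> iter n Q f = 0) -> (N <= M)%N -> Gsum q Q M f = Gsum q Q N f.
Proof.
move=> f_nil /subnKC <-; elim: (M - N)%N => [|k IHk]; first by rewrite addn0.
rewrite addnS /Gsum big_ord_recr /= -/(Gsum q Q _ f) IHk.
by rewrite f_nil ?leq_addr // /xemb mulr0 addr0.
Qed.

Definition Gseries f := Gsum q Q (size f) f.

Lemma Gseries_Gsum f N :
  (forall n, (N <= n)%N -> iter n Q f = 0) -> Gseries f = Gsum q Q N f.
Proof.
move=> f_nil; have f_nil' n : (size f <= n)%N -> iter n Q f = 0 by apply: iter_lower_eq0.
by rewrite /Gseries -(Gsum_stable f_nil' (leq_maxl _ N)) (Gsum_stable f_nil (leq_maxr _ _)).
Qed.

Lemma Gseries_lin2 : lin2 Gseries.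
Proof.
move=> c f g; set M := maxn (size f) (size g).
have GM h : (size h <= M)%N -> Gseries h = Gsum q Q M h.
  by move=> sh; apply: Gseries_Gsum => n /(leq_trans sh); apply: iter_lower_eq0.
by rewrite !GM ?leq_maxl ?leq_maxr ?Gsum_lin2 ?size_scale_addr_leq.
Qed.

End Lowering.

Section YOperator.
Implicit Types (u w : {poly K}) (h : {poly {poly K}}).
Variable P : {poly K} -> {poly K}.
Hypothesis P_lin : linear P.

HB.instance Definition _ := GRing.isLinear.Build K {poly K} {poly K} _ P P_lin.

Lemma opyD h h' : opy P (h + h') = opy P h + opy P h'.
Proof. by rewrite /opy !raddfD. Qed.

Lemma opy0 : opy P 0 = 0.
Proof. by rewrite /opy !raddf0. Qed.

Lemma opy_polyC_mul c h : opy P (xemb c%:P * h) = xemb c%:P * opy P h.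
Proof.
have map_polyCM h' : map_poly P ((c%:P)%:P * h') = (c%:P)%:P * map_poly P h'.
  by apply/polyP => i; rewrite !(coefCM, coef_map) /= !mul_polyC linearZ.
rewrite /opy /xemb !rmorphM /= swapXY_polyC map_polyC /= map_polyCM.
by rewrite rmorphM /= swapXY_polyC map_polyC.
Qed.

Lemma opy_lin2 G : lin2 G -> lin2 (fun f => opy P (G f)).
Proof. by move=> G_lin c f g; rewrite G_lin opyD opy_polyC_mul. Qed.

Lemma opy_yemb_xemb u w : opy P (yemb u * xemb w) = yemb (P u) * xemb w.
Proof.
have map_polyCM : map_poly P (u%:P * w^:P) = (P u)%:P * w^:P.
  by apply/polyP => i; rewrite !(coefCM, coef_map) /= mulrC [RHS]mulrC !mul_polyC linearZ.
rewrite /opy /yemb /xemb rmorphM /= swapXY_map_polyC swapXY_polyC map_polyCM.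
by rewrite rmorphM /= swapXY_polyC swapXY_map_polyC.
Qed.

Lemma lower_comm (p q : nat -> {poly K}) (Q : {poly K} -> {poly K}) :
  (forall n, size (q n) = n.+1) -> linear Q ->
  Q (p 0) = 0 -> (forall n, Q (p n.+1) = p n) ->
  Q (q 0) = 0 -> (forall n, Q (q n.+1) = q n) ->
  (forall n, P (q n) = p n) -> P \o Q =1 Q \o P.
Proof.
move=> size_q Q_lin Q_p0 Q_pS Q_q0 Q_qS P_q.
apply: (eq_linear_on_basis size_q) => [a f g | a f g | [|n]] /=.
- by rewrite Q_lin linearP.
- by rewrite linearP Q_lin.
- by rewrite Q_q0 P_q Q_p0 raddf0.
- by rewrite Q_qS !P_q Q_pS.
Qed.

End YOperator.

Lemma opy_Gseries_basis (p q : nat -> {poly K}) (Q P : {poly K} -> {poly K}) :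
  (forall n, size (p n) = n.+1) -> (forall n, Q (p n.+1) = p n) ->
  linear P -> (forall n, P (q n) = p n) ->
  forall n, opy P (Gseries Q q (p n)) = convp p n.
Proof.
move=> size_p Q_pS P_lin P_q n.
rewrite /Gseries /Gsum size_p (big_morph _ (opyD P_lin) (opy0 P_lin)).
rewrite /convp (reindex_inj rev_ord_inj) /=; apply: eq_bigr => i _.
rewrite opy_yemb_xemb // P_q subSS (iter_lower_basis Q_pS (leq_subr i n)).
by rewrite (subKn (ltnSE (ltn_ord i))) mulrC.
Qed.

End BasisOperators.

Theorem theorem2 (K : fieldType) (p : nat -> {poly K}) :
  [pchar K] =i pred0 ->
  (forall n, size (p n) = n.+1) ->
  (exists! Q : {poly K} -> {poly K}, isQ p Q) /\
  forall Q : {poly K} -> {poly K}, isQ p Q ->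
    (exists! q : nat -> {poly K}, isq Q q) /\
    forall q : nat -> {poly K}, isq Q q ->
      (exists! P : {poly K} -> {poly K}, linear P /\ (forall n, P (q n) = p n)) /\
      forall P : {poly K} -> {poly K}, linear P -> (forall n, P (q n) = p n) ->
        bijective P /\ (P \o Q =1 Q \o P) /\
        (forall f : {poly K}, exists N : nat, forall n, (N <= n)%N -> iter n Q f = 0) /\
        exists G : {poly K} -> {poly {poly K}},
          lin2 G /\
          (forall (f : {poly K}) (N : nat),
              (forall n, (N <= n)%N -> iter n Q f = 0) -> G f = Gsum q Q N f) /\
          (exists! F : {poly K} -> {poly {poly K}},
              lin2 F /\ (forall n, F (p n) = convp p n)) /\
          (forall F : {poly K} -> {poly {poly K}},
              lin2 F -> (forall n, F (p n) = convp p n) ->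
              forall f, F f = opy P (G f)).
Proof.
move=> _ size_p; split.
  have [Q [[Q_lin Q_p] Q_unique]] :=
    linear_extension_unique size_p (fun n => if n is m.+1 then p m else 0).
  exists Q; split=> [|Q' [Q'_lin [Q'_p0 Q'_pS]]].
    by split=> //; split=> [|n]; [apply: (Q_p 0) | apply: (Q_p n.+1)].
  by apply: Q_unique; split=> // -[|n].
move=> Q [Q_lin [Q_p0 Q_pS]].
split.
  have basic_isq := basic_poly_isq size_p Q_lin Q_p0 Q_pS.
  exists (basic_poly p); split=> // q q_isq.
  exact/functional_extensionality/(isq_unique size_p Q_lin Q_p0 Q_pS basic_isq q_isq).
move=> q [size_q [_ [Q_q0 Q_qS]]]; split; first exact: linear_extension_unique.
move=> P P_lin P_q; split; first exact: linear_basis_bij size_q size_p P_lin P_q.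
split; first exact: (lower_comm P_lin size_q Q_lin Q_p0 Q_pS Q_q0 Q_qS P_q).
split; first by move=> f; exists (size f) => n; apply: iter_lower_eq0.
have G_lin := Gseries_lin2 size_p Q_lin Q_p0 Q_pS q.
exists (Gseries Q q); split=> //.
split; first by move=> f N; apply: Gseries_Gsum.
have F_lin := opy_lin2 P_lin G_lin.
have F_p := opy_Gseries_basis size_p Q_pS P_lin P_q.
have F_unique F :
    lin2 F -> (forall n, F (p n) = convp p n) -> F =1 (fun f => opy P (Gseries Q q f)).
  by move=> F'_lin F'_p; apply: (eq_lin2_on_basis size_p F'_lin F_lin) => n; rewrite F'_p F_p.
split; last exact: F_unique.
exists (fun f => opy P (Gseries Q q f)); split=> // F [F'_lin F'_p].
by apply: functional_extensionality => f; rewrite (F_unique F).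
Qed.
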